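(* Let $k\ge3$. Let $G=(V,E)$ be a $(k-2)$-connected $k$-colorable chordal graph and let $T$ be a clique of $G$ with $T\ne V$, such that $(G,T)$ can be obtained from $(G-v,T\setminus\{v\})$ using an introduce operation. If $\mathcal{C}^c_k(G-v,T\setminus\{v\})$ is a $(k-2,k)$-color-complete graph, then $\mathcal{C}^c_k(G,T)$ is a $(k-1,k)$-color-complete graph. If $|T|=k$ or $\mathcal{C}^c_k(G-v,T\setminus\{v\})$ is a forest that satisfies the injective neighborhood property, then $\mathcal{C}^c_k(G,T)$ is a forest that satisfies the injective neighborhood property.
   Context: A chordal graph has no induced cycle of length $>3$; for $\ell\ge1$, $G$ is $\ell$-connected if $|V(G)|\ge\ell+1$ and every vertex cut has at least $\ell$ vertices. $(G,T)$ (a graph with $T\subseteq V(G)$) is obtained from $(G-v,T\setminus\{v\})$ by introducing $v$ if $T\ne V(G)$, $v\in T$ and $N(v)\subseteq T$. A $k$-coloring of $G$ is a map $\alpha:V(G)\to\{1,\dots,k\}$ with $\alpha(u)\ne\alpha(w)$ for all edges $uw$. $\mathcal{C}_k(G)$ has the $k$-colorings as nodes, adjacent iff they differ on exactly one vertex. For $T\subseteq V(G)$, label each coloring $\gamma$ by $\gamma|_T$. A label component is a maximal set of colorings with the same label inducing a connected subgraph of $\mathcal{C}_k(G)$. The contracted solution graph $\mathcal{C}^c_k(G,T)=(H,\ell)$ has one node $x$ per label component $S_x$, distinct $x,y$ adjacent iff some $\gamma\in S_x,\gamma'\in S_y$ are adjacent in $\mathcal{C}_k(G)$, and $\ell(x)$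 the common label on $S_x$. For $1\le m\le k$, a labeled graph $(H,\ell)$ is $(m,k)$-color-complete if there is a set $T$ with $|T|=m$ such that every label is a $k$-coloring of the complete graph on $T$, every such $k$-coloring is the label of exactly one node, and two nodes are adjacent iff their labels differ on exactly one element of $T$. $(H,\ell)$ satisfies the injective neighborhood property if any two distinct neighbors of any node have distinct labels. *)

From mathcomp Require Import all_boot.
Set Implicit Arguments. Unset Strict Implicit. Unset Printing Implicit Defensive.

(* A simple graph is given by a finite type V of potential vertices, a
   symmetric irreflexive relation e, and a vertex set W : {set V}
   (the graph is the induced graph G[W]). Using a vertex set lets us
   speak of G - v as (W :\ v). *)

Section Graphs.
Variables (V : finType) (e : rel V).

Definition restr (A : {set V}) : rel V := fun x y => [&& x \in A, y \in A & e x y].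

Definition is_vertex_cut (W S : {set V}) : Prop :=
  S \subset W /\
  exists x y, [/\ x \in W :\: S, y \in W :\: S & ~~ connect (restr (W :\: S)) x y].

Definition l_connected (l : nat) (W : {set V}) : Prop :=
  l.+1 <= #|W| /\ forall S, is_vertex_cut W S -> l <= #|S|.

Definition chordal (W : {set V}) : Prop :=
  forall s : seq V, uniq s -> {subset s <= W} -> 3 < size s -> cycle e s ->
  exists x y, [/\ x \in s, y \in s, e x y, y != next s x & y != prev s x].

Definition is_clique (W T : {set V}) : Prop :=
  T \subset W /\ {in T &, forall x y, x != y -> e x y}.

Definition introduce (W T : {set V}) (v : V) : Prop :=
  [/\ T != W, v \in T & {in W, forall u, e v u -> u \in T}].

(* A k-coloring of G[W] is a partial map V -> 'I_k with domain exactly W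
   (colors 0..k-1 stand for 1..k). *)
Definition pcol (k : nat) := {ffun V -> option 'I_k}.

Definition is_coloring (k : nat) (W : {set V}) (g : pcol k) : bool :=
  [forall x, (g x != None) == (x \in W)] &&
  [forall x, forall y, [&& x \in W, y \in W & e x y] ==> (g x != g y)].

Definition colorings (k : nat) (W : {set V}) : {set pcol k} :=
  [set g | is_coloring W g].

Definition col_adj (k : nat) (g g' : pcol k) : bool :=
  #|[set x | g x != g' x]| == 1.

Definition label (k : nat) (T : {set V}) (g : pcol k) : pcol k :=
  [ffun x => if x \in T then g x else None].

Definition lc_pre (k : nat) (W T : {set V}) (S : {set pcol k}) : Prop :=
  [/\ S != set0, S \subset colorings k W,
      {in S &, forall g g', label T g = label T g'} &
      {in S &, forall g g',
         connect (fun a b => [&& a \in S, b \in S & col_adj a b]) g g'}].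

Definition label_component (k : nat) (W T : {set V}) (S : {set pcol k}) : Prop :=
  lc_pre W T S /\ forall S' : {set pcol k}, S \subset S' -> lc_pre W T S' -> S' = S.

(* Contracted solution graph C^c_k(G[W],T): nodes, adjacency, labels *)
Definition CS_node (k : nat) (W T : {set V}) (x : {set pcol k}) : Prop :=
  label_component W T x.

Definition CS_adj (k : nat) (x y : {set pcol k}) : bool :=
  (x != y) && [exists g in x, exists g' in y, col_adj g g'].

Definition CS_lab (k : nat) (T : {set V}) (x : {set pcol k}) : pcol k :=
  match [pick g in x] with Some g => label T g | None => [ffun => None] end.

Definition Kcol (k : nat) (T' : {set V}) (f : pcol k) : Prop :=
  (forall t, (f t != None) = (t \in T')) /\ {in T' &, injective f}.

Definition color_complete (k : nat) (N : Type) (nodes : N -> Prop)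
    (adj : N -> N -> bool) (lab : N -> pcol k) (m : nat) : Prop :=
  exists T' : {set V},
    [/\ #|T'| = m,
        forall x, nodes x -> Kcol T' (lab x),
        forall f, Kcol T' f -> exists! x, nodes x /\ lab x = f &
        forall x y, nodes x -> nodes y ->
          (adj x y <-> #|[set t in T' | lab x t != lab y t]| = 1)].

End Graphs.

Definition forest (N : eqType) (nodes : N -> Prop) (adj : rel N) : Prop :=
  ~ exists s : seq N,
      [/\ uniq s, 3 <= size s, forall x, x \in s -> nodes x & cycle adj s].

Definition inj_nbhd (N : Type) (L : Type) (nodes : N -> Prop)
    (adj : N -> N -> bool) (lab : N -> L) : Prop :=
  forall x y z, nodes x -> nodes y -> nodes z -> adj x y -> adj x z ->
    y <> z -> lab y <> lab z.

From mathcomp Require Import all_boot zify.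
Set Implicit Arguments. Unset Strict Implicit. Unset Printing Implicit Defensive.

(* Since N(v) is contained in T, a recolouring sequence of G - v that fixes the
   colours of T :\ v lifts to G with the colour of v kept fixed. Hence a label
   component of (G, T) is determined by the component of (G - v, T :\ v) that
   it restricts to together with the colour of v, and colour-completeness passes
   from T :\ v to T.
   If |T| = k, two colourings differing on one vertex of T would use k + 1
   colours on T, so C^c_k(G, T) has no edges. Otherwise T :\ v is a vertex cut,
   so |T :\ v| = k - 2 and exactly two colours are free for v. Thus every fibre
   of the restriction map has at most two nodes, an edge between two fibres
   keeps the colour of v, and all edges between the same two fibres give v the
   same colour (the unique colour free for both endpoints). A cycle of
   C^c_k(G, T) would then contradict the existence of a leaf in its image in the
   forest C^c_k(G - v, T :\ v); the injective neighbourhood property transfers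
   along the same map. *)

Lemma connect_transport (T1 T2 : finType) (r1 : rel T1) (r2 : rel T2)
    (P : T1 -> Prop) (F : T1 -> T2) :
  (forall a b, P a -> r1 a b -> P b /\ r2 (F a) (F b)) ->
  forall a b, P a -> connect r1 a b -> connect r2 (F a) (F b).
Proof.
move=> step a b Pa /connectP [p pth ->] {b}.
elim: p a Pa pth => [|c p IH] a Pa /=; first by rewrite connect0.
case/andP => r1ac pth; have [Pc r2ac] := step _ _ Pa r1ac.
exact: connect_trans (connect1 r2ac) (IH _ Pc pth).
Qed.

Section Colorings.
Variables (V : finType) (e : rel V) (k : nat).
Local Notation col := (pcol V k).

Lemma col_adjC (a b : col) : col_adj a b = col_adj b a.
Proof.
by rewrite /col_adj (_ : [set x | a x != b x] = [set x | b x != a x]) //;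
  apply/setP => x; rewrite !inE eq_sym.
Qed.

Lemma col_adjP (a b : col) :
  reflect (exists u, a u != b u /\ forall x, x != u -> a x = b x) (col_adj a b).
Proof.
apply: (iffP cards1P) => [[u Du]|[u [abu ab]]].
  exists u; split; first by have := set11 u; rewrite -Du inE.
  move=> x xu; apply/eqP; apply: contraNT xu => abx.
  have : x \in [set y | a y != b y] by rewrite inE.
  by rewrite Du inE.
by exists u; apply/setP => x; rewrite !inE; case: (eqVneq x u) => [->|/ab ->]; rewrite ?eqxx.
Qed.

Lemma coloringP (W : {set V}) (g : col) :
  reflect ((forall x, (g x != None) = (x \in W)) /\
           (forall x y, x \in W -> y \in W -> e x y -> g x != g y))
          (g \in colorings e k W).
Proof.
rewrite inE; apply: (iffP andP) => [[/forallP dom /forallP prop]|[dom prop]].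
  split=> [x|x y xW yW exy]; first by have /eqP := dom x.
  by have /forallP/(_ y) := prop x; rewrite xW yW exy.
split; apply/forallP => x; first by rewrite dom.
by apply/forallP => y; apply/implyP => /and3P [xW yW]; apply: prop.
Qed.

Lemma coloring_dom (W : {set V}) (g : col) x :
  g \in colorings e k W -> (g x != None) = (x \in W).
Proof. by case/coloringP. Qed.

Lemma coloring_out (W : {set V}) (g : col) x :
  g \in colorings e k W -> x \notin W -> g x = None.
Proof. by move=> gc xW; apply/eqP; rewrite -[_ == _]negbK (coloring_dom _ gc). Qed.

Lemma coloring_edge (W : {set V}) (g : col) x y :
  g \in colorings e k W -> x \in W -> y \in W -> e x y -> g x != g y.
Proof. by case/coloringP => _; apply. Qed.

Lemma coloring_inj (W T : {set V}) (g : col) :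
  g \in colorings e k W -> is_clique e W T -> {in T &, injective g}.
Proof.
move=> gc [TW cl] x y xT yT; apply: contra_eq => xy.
exact: coloring_edge gc (subsetP TW _ xT) (subsetP TW _ yT) (cl _ _ xT yT xy).
Qed.

Lemma label_in (T : {set V}) (g : col) x : x \in T -> label T g x = g x.
Proof. by rewrite ffunE => ->. Qed.

Lemma label_out (T : {set V}) (g : col) x : x \notin T -> label T g x = None.
Proof. by rewrite ffunE => /negbTE ->. Qed.

Lemma Kcol_label (W T : {set V}) (g : col) :
  is_clique e W T -> g \in colorings e k W -> Kcol T (label T g).
Proof.
move=> cl gc; have [TW _] := cl; split=> [t|x y xT yT].
  case: (boolP (t \in T)) => tT; last by rewrite label_out // (negbTE tT).
  by rewrite label_in // (coloring_dom _ gc) (subsetP TW).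
by rewrite !label_in //; apply: coloring_inj gc cl x y xT yT.
Qed.

Lemma card_colors_clique (W T A : {set V}) (g : col) :
  g \in colorings e k W -> is_clique e W T -> A \subset T -> #|g @: A| = #|A|.
Proof.
move=> gc cl AT; apply: card_in_imset => x y /(subsetP AT) xT /(subsetP AT) yT.
exact: coloring_inj gc cl x y xT yT.
Qed.

Lemma None_notin_colors (W A : {set V}) (g : col) :
  g \in colorings e k W -> A \subset W -> None \notin g @: A.
Proof.
move=> gc AW; apply/imsetP => -[x xA gx].
by move: (coloring_dom x gc); rewrite -gx eqxx (subsetP AW).
Qed.

Lemma card_Some (C : {set option 'I_k}) : None \notin C -> #|C| <= k.
Proof.
move=> NC; have : C \subset ~: [set None].
  by apply/subsetP => c cC; rewrite !inE; apply: contraNneq NC => <-.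
by move/subset_leq_card; rewrite cardsC1 card_option card_ord.
Qed.

Lemma card_clique_le (W T : {set V}) (g : col) :
  g \in colorings e k W -> is_clique e W T -> #|T| <= k.
Proof.
move=> gc cl; rewrite -(card_colors_clique gc cl (subxx T)).
by apply/card_Some/(None_notin_colors gc); case: cl.
Qed.

Section LabelComponents.
Variables (W T : {set V}).

Definition same_label_step : rel col := fun a b =>
  [&& a \in colorings e k W, b \in colorings e k W,
      label T a == label T b & col_adj a b].

Definition lcomp (g : col) : {set col} := [set h | connect same_label_step g h].

Lemma same_label_step_sym : symmetric same_label_step.
Proof. by move=> a b; rewrite /same_label_step col_adjC eq_sym andbCA. Qed.

Lemma lcomp_refl (g : col) : g \in lcomp g.
Proof. by rewrite inE connect0. Qed.

Lemma lcomp_eq (g h : col) : connect same_label_step g h -> lcomp g = lcomp h.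
Proof.
move=> gh; apply/setP => x; rewrite !inE.
by rewrite (same_connect (sym_connect_sym same_label_step_sym) gh).
Qed.

Lemma lcomp_eq_mem (g h : col) : h \in lcomp g -> lcomp g = lcomp h.
Proof. by rewrite inE => /lcomp_eq. Qed.

Lemma lcomp_inv (g h : col) :
  g \in colorings e k W -> h \in lcomp g ->
  h \in colorings e k W /\ label T h = label T g.
Proof.
move=> gc; rewrite inE => /connectP [p pth ->] {h}.
elim: p g gc pth => [|c p IH] g gc //=.
case/andP => /and4P [_ cc /eqP lgc _] pth.
by have [pc ->] := IH c cc pth; rewrite -lgc.
Qed.

Lemma lc_pre_sub (S : {set col}) (g : col) :
  lc_pre e W T S -> g \in S -> S \subset lcomp g.
Proof.
case=> _ Sc Slab Scon gS; apply/subsetP => h hS; rewrite inE.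
apply: (connect_transport (P := fun a => a \in S)) (Scon _ _ gS hS) => // a b aS.
case/and3P => _ bS ab; split => //.
by rewrite /same_label_step (subsetP Sc _ aS) (subsetP Sc _ bS) ab (Slab _ _ aS bS) eqxx.
Qed.

Lemma lcomp_node (g : col) : g \in colorings e k W -> CS_node e W T (lcomp g).
Proof.
move=> gc; have pre : lc_pre e W T (lcomp g).
  split.
  - by apply/set0Pn; exists g; apply: lcomp_refl.
  - by apply/subsetP => h /(lcomp_inv gc) [].
  - by move=> a b /(lcomp_inv gc) [_ ->] /(lcomp_inv gc) [_ ->].
  move=> a b ag bg; rewrite (lcomp_eq_mem ag) inE in bg.
  apply: (connect_transport (P := fun x => x \in lcomp g)) bg => // x y xg xy.
  have yg : y \in lcomp g by rewrite (lcomp_eq_mem xg) inE connect1.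
  by split => //=; rewrite xg yg; case/and4P: xy.
split => // S gS preS; apply/eqP; rewrite eqEsubset gS andbT.
exact: lc_pre_sub preS (subsetP gS _ (lcomp_refl g)).
Qed.

Lemma CS_nodeP (S : {set col}) :
  CS_node e W T S -> exists2 g, g \in colorings e k W & S = lcomp g.
Proof.
case=> pre Smax; have [/set0Pn [g gS] Sc _ _] := pre.
have gc := subsetP Sc _ gS; have [preg _] := lcomp_node gc.
by exists g => //; symmetry; apply: Smax preg; apply: lc_pre_sub pre gS.
Qed.

Lemma CS_lab_lcomp (g : col) :
  g \in colorings e k W -> CS_lab T (lcomp g) = label T g.
Proof.
move=> gc; rewrite /CS_lab; case: pickP => [h /(lcomp_inv gc) [_ ->] //|/(_ g)].
by rewrite lcomp_refl.
Qed.

Lemma CS_adj_lcomp (g h : col) :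
  g \in colorings e k W -> h \in colorings e k W ->
  CS_adj (lcomp g) (lcomp h) ->
  exists g1 h1 u, [/\ g1 \in lcomp g, h1 \in lcomp h,
     g1 u != h1 u, (forall x, x != u -> g1 x = h1 x) &
     [set t in T | label T g t != label T h t] = [set u]].
Proof.
move=> gc hc /andP [ne /existsP [g1 /andP [g1g /existsP [h1 /andP [h1h adj]]]]].
have [u [g1h1u g1h1]] := col_adjP _ _ adj; exists g1, h1, u; split => //.
have [g1c lg] := lcomp_inv gc g1g; have [h1c lh] := lcomp_inv hc h1h.
set D := [set t in T | _]; have Du : D \subset [set u].
  apply/subsetP => t; rewrite !inE -lg -lh => /andP [tT].
  by rewrite !label_in //; apply: contraR => /g1h1 ->.
have [t tD] : exists t, t \in D.
  apply/set0Pn; apply: contra ne => /eqP D0.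
  have lab : label T g1 = label T h1.
    apply/ffunP => x; case: (boolP (x \in T)) => xT; last by rewrite !label_out.
    rewrite lg lh; apply/eqP; apply: contraT => nx.
    have : x \in D by rewrite inE xT nx.
    by rewrite D0 inE.
  rewrite (lcomp_eq_mem g1g) (lcomp_eq_mem h1h); apply/eqP/lcomp_eq/connect1.
  by rewrite /same_label_step g1c h1c lab eqxx.
apply/eqP; rewrite eqEsubset Du sub1set.
by have /subsetP/(_ t tD) := Du; rewrite inE => /eqP <-.
Qed.

Lemma lcomp_neq (g h : col) :
  g \in colorings e k W -> h \in colorings e k W ->
  label T g != label T h -> lcomp g != lcomp h.
Proof.
by move=> gc hc; apply: contra => /eqP E; rewrite -(CS_lab_lcomp gc) -(CS_lab_lcomp hc) E.
Qed.

Lemma CS_adj_lcompI (g h g1 h1 : col) :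
  g \in colorings e k W -> h \in colorings e k W -> label T g != label T h ->
  g1 \in lcomp g -> h1 \in lcomp h -> col_adj g1 h1 -> CS_adj (lcomp g) (lcomp h).
Proof.
move=> gc hc gh g1g h1h adj; rewrite /CS_adj lcomp_neq //=.
by apply/existsP; exists g1; rewrite g1g /=; apply/existsP; exists h1; rewrite h1h.
Qed.

Definition rep (X : {set col}) : col := odflt [ffun => None] [pick g in X].

Lemma rep_lcomp (g : col) : rep (lcomp g) \in lcomp g.
Proof. by rewrite /rep; case: pickP => [//|/(_ g)]; rewrite lcomp_refl. Qed.

Lemma CS_color_completeE m (g0 : col) :
  g0 \in colorings e k W -> is_clique e W T ->
  color_complete (CS_node e W T) (@CS_adj V k) (CS_lab T) m ->
  [/\ #|T| = m,
      forall f, Kcol T f -> exists2 g, g \in colorings e k W & label T g = f,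
      {in colorings e k W &, forall g h, label T g = label T h -> lcomp g = lcomp h} &
      {in colorings e k W &, forall g h,
         #|[set t in T | label T g t != label T h t]| = 1 -> CS_adj (lcomp g) (lcomp h)}].
Proof.
move=> g0c cl [T0 [cT0 lab_Kcol lab_uniq adj_diff]].
have T0E : T0 = T.
  have [dom _] := Kcol_label cl g0c; have := lab_Kcol _ (lcomp_node g0c).
  by rewrite CS_lab_lcomp // => -[dom0 _]; apply/setP => t; rewrite -dom -dom0.
subst T0.
split => // [f /lab_uniq [x [[/CS_nodeP [g gc ->]]]]|g h gc hc gh|g h gc hc].
- by rewrite CS_lab_lcomp // => <- _; exists g.
- have K := lab_Kcol _ (lcomp_node gc); rewrite CS_lab_lcomp // in K.
  have [x [_ u]] := lab_uniq _ K.
  by apply: etrans (esym (u _ _)) (u _ _); split; rewrite ?CS_lab_lcomp ?gh //;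
    apply: lcomp_node.
- move=> D; apply/(adj_diff _ _ (lcomp_node gc) (lcomp_node hc)).
  by rewrite !CS_lab_lcomp.
Qed.

Lemma CS_color_complete m :
  is_clique e W T -> #|T| = m ->
  (forall f, Kcol T f -> exists2 g, g \in colorings e k W & label T g = f) ->
  {in colorings e k W &, forall g h, label T g = label T h -> lcomp g = lcomp h} ->
  {in colorings e k W &, forall g h,
     #|[set t in T | label T g t != label T h t]| = 1 -> CS_adj (lcomp g) (lcomp h)} ->
  color_complete (CS_node e W T) (@CS_adj V k) (CS_lab T) m.
Proof.
move=> cl cT onto uniq adj; exists T; split => //.
- by move=> x /CS_nodeP [g gc ->]; rewrite CS_lab_lcomp //; apply: Kcol_label cl gc.
- move=> f /onto [g gc gf]; exists (lcomp g); split.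
    by split; [apply: lcomp_node | rewrite CS_lab_lcomp].
  by move=> x [/CS_nodeP [h hc ->]]; rewrite CS_lab_lcomp // => hf; apply: uniq; rewrite ?gf.
move=> x y /CS_nodeP [g gc ->] /CS_nodeP [h hc ->]; rewrite !CS_lab_lcomp //.
split=> [/(CS_adj_lcomp gc hc) [g1 [h1 [u [_ _ _ _ ->]]]]|]; last exact: adj.
exact: cards1.
Qed.

Lemma no_CS_adj_full (x y : {set col}) :
  is_clique e W T -> #|T| = k -> CS_node e W T x -> CS_node e W T y -> ~~ CS_adj x y.
Proof.
move=> cl cT /CS_nodeP [g gc ->] /CS_nodeP [h hc ->]; apply/negP.
case/(CS_adj_lcomp gc hc) => g1 [h1 [u [g1g h1h g1h1u g1h1 Du]]].
have [g1c _] := lcomp_inv gc g1g; have [h1c _] := lcomp_inv hc h1h; have [TW _] := cl.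
have uT : u \in T by have := set11 u; rewrite -Du inE => /andP [].
have fresh : h1 u \notin g1 @: T.
  apply/imsetP => -[t tT]; case: (eqVneq t u) => [->|tu].
    by move=> E; rewrite E eqxx in g1h1u.
  by rewrite g1h1 // => /(coloring_inj h1c cl uT tT) ut; rewrite ut eqxx in tu.
have NC : None \notin h1 u |: g1 @: T.
  by rewrite !inE negb_or eq_sym (coloring_dom _ h1c) (subsetP TW) //= (None_notin_colors g1c TW).
by have := card_Some NC; rewrite cardsU1 fresh (card_colors_clique g1c cl (subxx T)) cT ltnn.
Qed.

End LabelComponents.

(* [setv v g None] is the restriction of [g] to G - v. *)
Definition setv (v : V) (g : col) (c : option 'I_k) : col :=
  [ffun x => if x == v then c else g x].

Lemma setv_id v (g : col) : setv v g (g v) = g.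
Proof. by apply/ffunP => x; rewrite ffunE; case: eqP => // ->. Qed.

Lemma setvK v (g : col) c c' : setv v (setv v g c) c' = setv v g c'.
Proof. by apply/ffunP => x; rewrite !ffunE; case: eqP. Qed.

Lemma label_setv (T : {set V}) v (g : col) c :
  v \in T -> label T (setv v g c) = setv v (label (T :\ v) g) c.
Proof.
by move=> vT; apply/ffunP => x; rewrite !ffunE !inE; case: (eqVneq x v) => [->|_] /=; rewrite ?vT.
Qed.

Lemma label_setD1 (T : {set V}) v (g : col) c :
  label (T :\ v) (setv v g c) = setv v (label T g) None.
Proof.
by apply/ffunP => x; rewrite !ffunE !inE; case: (eqVneq x v) => //=; case: (x \in T).
Qed.

Lemma col_adj_setv v (a b : col) c :
  col_adj a b -> a v = b v -> col_adj (setv v a c) (setv v b c).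
Proof.
case/col_adjP => u [abu ab] abv; have uv : u != v by apply: contraNneq abu => ->; rewrite abv.
apply/col_adjP; exists u; split=> [|x xu]; rewrite !ffunE ?(negbTE uv) //.
by case: (x == v); rewrite ?ab.
Qed.

Section Introduce.
Variables (W T : {set V}) (v : V).
Hypotheses (e_sym : symmetric e) (e_irr : irreflexive e).
Hypotheses (T_clique : is_clique e W T) (intro : introduce e W T v).

Let TW : T \subset W. Proof. by case: T_clique. Qed.
Let vT : v \in T. Proof. by case: intro. Qed.
Let vW : v \in W. Proof. exact: subsetP TW _ vT. Qed.
Let Nv : {in W, forall u, e v u -> u \in T}. Proof. by case: intro. Qed.

Local Notation lcompG := (lcomp W T).
Local Notation lcompGv := (lcomp (W :\ v) (T :\ v)).

Lemma coloring_delv (g : col) :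
  g \in colorings e k W -> setv v g None \in colorings e k (W :\ v).
Proof.
move=> gc; apply/coloringP; split=> [x|x y]; rewrite !ffunE !inE.
  by case: (x == v) => //=; rewrite (coloring_dom _ gc).
case/andP => xv xW /andP [yv yW] exy; rewrite (negbTE xv) (negbTE yv).
exact: coloring_edge gc xW yW exy.
Qed.

Lemma coloring_setv (a : col) c :
  a \in colorings e k (W :\ v) -> c != None ->
  (forall t, t \in T :\ v -> a t != c) -> setv v a c \in colorings e k W.
Proof.
move=> ac cN aT; apply/coloringP; split=> [x|x y xW yW exy]; rewrite !ffunE.
  by case: (eqVneq x v) => [->|xv]; rewrite ?cN ?vW // (coloring_dom _ ac) !inE xv.
case: (eqVneq x v) => [xv|xv]; case: (eqVneq y v) => [yv|yv].
- by move: exy; rewrite xv yv e_irr.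
- by rewrite eq_sym aT // !inE yv Nv // -xv.
- by rewrite aT // !inE xv Nv // -yv e_sym.
- by apply: coloring_edge ac _ _ exy; rewrite !inE ?xv ?yv.
Qed.

Lemma coloring_clique_v (g : col) t :
  g \in colorings e k W -> t \in T :\ v -> g t != g v.
Proof.
move=> gc; rewrite !inE => /andP [tv tT].
by apply: contra tv => /eqP /(coloring_inj gc T_clique tT vT) ->.
Qed.

Lemma connect_delv (g h : col) :
  g \in colorings e k W -> connect (same_label_step W T) g h ->
  connect (same_label_step (W :\ v) (T :\ v)) (setv v g None) (setv v h None).
Proof.
move=> gc; apply: (connect_transport (P := fun a => a \in colorings e k W)
  (F := fun a => setv v a None)) gc => a b ac /and4P [_ bc /eqP lab adj].
split => //.
rewrite /same_label_step !coloring_delv // !label_setD1 lab eqxx /=.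
by apply: col_adj_setv; rewrite // -(label_in a vT) -(label_in b vT) lab.
Qed.

(* Along the lifted path v keeps the colour [g v]: the label pins down the
   colours of N(v), which lies in T. *)
Lemma lift_lcomp (g a : col) :
  g \in colorings e k W -> a \in lcompGv (setv v g None) ->
  setv v a (g v) \in lcompG g.
Proof.
move=> gc; rewrite !inE => ga.
have gvN : g v != None by rewrite (coloring_dom _ gc).
pose P b := b \in colorings e k (W :\ v) /\
            label (T :\ v) b = label (T :\ v) (setv v g None).
have Pc b : P b -> setv v b (g v) \in colorings e k W.
  case=> bc lb; apply: coloring_setv => // t tT.
  by rewrite -(label_in b tT) lb label_in // ffunE (negbTE (setD1P tT).1)
    coloring_clique_v.
have step b1 b2 : P b1 -> same_label_step (W :\ v) (T :\ v) b1 b2 ->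
    P b2 /\ same_label_step W T (setv v b1 (g v)) (setv v b2 (g v)).
  move=> Pb1 /and4P [_ b2c /eqP lab adj].
  have Pb2 : P b2 by split; rewrite // -lab; case: Pb1.
  split => //; rewrite /same_label_step !Pc // !label_setv // lab eqxx /=.
  have [b1c _] := Pb1; have vWv : v \notin W :\ v by rewrite setD11.
  by apply: col_adj_setv; rewrite // (coloring_out b1c vWv) (coloring_out b2c vWv).
have Pg : P (setv v g None) by split; rewrite ?coloring_delv.
by have := connect_transport step Pg ga; rewrite /= setvK setv_id.
Qed.

Lemma lcomp_eq_delv (g h : col) :
  g \in colorings e k W -> h \in colorings e k W ->
  lcompGv (setv v g None) = lcompGv (setv v h None) -> g v = h v ->
  lcompG g = lcompG h.
Proof.
move=> gc hc E gvh; apply: lcomp_eq_mem.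
have hg : setv v h None \in lcompGv (setv v g None) by rewrite E lcomp_refl.
by have := lift_lcomp gc hg; rewrite gvh setvK setv_id.
Qed.

Lemma clique_setD1 : is_clique e (W :\ v) (T :\ v).
Proof.
have [_ cl] := T_clique; split; first exact: setSD.
by move=> x y /setD1P [_ xT] /setD1P [_ yT]; apply: cl.
Qed.

Definition restrict_node (X : {set col}) : {set col} := lcompGv (setv v (rep X) None).

Lemma restrict_node_lcomp (g : col) :
  g \in colorings e k W -> restrict_node (lcompG g) = lcompGv (setv v g None).
Proof.
move=> gc; apply/esym/lcomp_eq/connect_delv => //.
by have := rep_lcomp W T g; rewrite inE.
Qed.

Section OldColorComplete.
Hypothesis old_onto : forall f, Kcol (T :\ v) f ->
  exists2 a, a \in colorings e k (W :\ v) & label (T :\ v) a = f.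
Hypothesis old_uniq : {in colorings e k (W :\ v) &, forall a b,
  label (T :\ v) a = label (T :\ v) b -> lcompGv a = lcompGv b}.
Hypothesis old_adj : {in colorings e k (W :\ v) &, forall a b,
  #|[set t in T :\ v | label (T :\ v) a t != label (T :\ v) b t]| = 1 ->
  CS_adj (lcompGv a) (lcompGv b)}.

Lemma introduce_onto f : Kcol T f -> exists2 g, g \in colorings e k W & label T g = f.
Proof.
case=> fdom finj.
have /old_onto [a ac la] : Kcol (T :\ v) (setv v f None).
  split=> [t|x y /setD1P [xv xT] /setD1P [yv yT]]; rewrite !ffunE.
    by rewrite !inE; case: (eqVneq t v) => //= _; apply: fdom.
  by rewrite (negbTE xv) (negbTE yv); apply: finj.
exists (setv v a (f v)); last by rewrite label_setv // la setvK setv_id.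
apply: coloring_setv; rewrite ?fdom // => t tTv.
have [tv tT] := setD1P tTv; rewrite -(label_in a tTv) la ffunE (negbTE tv).
by apply: contra tv => /eqP /(finj _ _ tT vT) ->.
Qed.

Lemma introduce_uniq :
  {in colorings e k W &, forall g h, label T g = label T h -> lcompG g = lcompG h}.
Proof.
move=> g h gc hc lgh; apply: lcomp_eq_delv => //.
  by apply: old_uniq; rewrite ?coloring_delv // !label_setD1 lgh.
by rewrite -(label_in g vT) -(label_in h vT) lgh.
Qed.

Lemma introduce_adj_at_v (g h : col) :
  g \in colorings e k W -> h \in colorings e k W ->
  {in T :\ v, g =1 h} -> g v != h v -> CS_adj (lcompG g) (lcompG h).
Proof.
move=> gc hc gh gvh; pose h' := setv v g (h v).
have h'c : h' \in colorings e k W.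
  rewrite /h' -(setvK v g None).
  apply: coloring_setv; rewrite ?(coloring_dom _ hc) ?coloring_delv // => t tTv.
  by rewrite ffunE (negbTE (setD1P tTv).1) gh // coloring_clique_v.
have lh' : label T h' = label T h.
  apply/ffunP => x; rewrite !ffunE; case: (eqVneq x v) => [->|xv]; first by rewrite vT.
  by case: ifP => // xT; rewrite gh // !inE xv.
have ghv : label T g != label T h.
  by apply: contra gvh => /eqP/ffunP/(_ v); rewrite !label_in // => ->.
apply: (CS_adj_lcompI (h1 := h') gc hc ghv (lcomp_refl _ _ g)).
  by rewrite -(introduce_uniq h'c hc lh') lcomp_refl.
apply/col_adjP; exists v; rewrite ffunE eqxx; split => // x xv.
by rewrite ffunE (negbTE xv).
Qed.

Lemma introduce_adj_off_v (g h : col) :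
  g \in colorings e k W -> h \in colorings e k W -> g v = h v ->
  #|[set t in T :\ v | g t != h t]| = 1 -> CS_adj (lcompG g) (lcompG h).
Proof.
move=> gc hc gvh D1.
have := old_adj (coloring_delv gc) (coloring_delv hc).
rewrite (_ : [set t in _ | _] = [set t in T :\ v | g t != h t]); last first.
  apply/setP => t; rewrite [in LHS]inE [in RHS]inE.
  case: (boolP (t \in T :\ v)) => //= tTv.
  by rewrite !label_in // !ffunE (negbTE (setD1P tTv).1).
case/(_ D1)/andP => _ /existsP [a /andP [ag /existsP [b /andP [bh ab]]]].
move/eqP/cards1P: (D1) => [u]; rewrite -setP => /(_ u).
rewrite !inE eqxx => /andP [/andP [_ uT] ghu].
apply: (CS_adj_lcompI gc hc _ (lift_lcomp gc ag) (lift_lcomp hc bh)).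
  by apply: contra ghu => /eqP/ffunP/(_ u); rewrite !(label_in _ uT) => ->.
have vWv : v \notin W :\ v by rewrite setD11.
have [ac _] := lcomp_inv (coloring_delv gc) ag.
have [bc _] := lcomp_inv (coloring_delv hc) bh.
by rewrite gvh; apply: col_adj_setv; rewrite // (coloring_out ac vWv) (coloring_out bc vWv).
Qed.

Lemma introduce_adj :
  {in colorings e k W &, forall g h,
     #|[set t in T | label T g t != label T h t]| = 1 -> CS_adj (lcompG g) (lcompG h)}.
Proof.
move=> g h gc hc /eqP/cards1P [u Du].
have same_off_u t : t \in T -> t != u -> g t = h t.
  move=> tT tu; rewrite -(label_in g tT) -(label_in h tT); apply/eqP.
  apply: contraNT tu => D; have : t \in [set t in T | label T g t != label T h t].
    by rewrite inE tT D.
  by rewrite Du inE.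
have [uT ghu] : u \in T /\ g u != h u.
  have := set11 u; rewrite -Du inE => /andP [uT].
  by rewrite (label_in g uT) (label_in h uT).
case: (eqVneq u v) => [uv|uv].
  apply: introduce_adj_at_v => // [t /setD1P [tv tT]|]; last by rewrite -uv.
  by apply: same_off_u; rewrite ?uv.
apply: introduce_adj_off_v => //; first by apply: same_off_u; rewrite // eq_sym.
apply/eqP/cards1P; exists u; apply/setP => t; rewrite !inE.
case: (eqVneq t u) => [->|tu]; first by rewrite uv ghu uT.
case: (boolP (t \in T)) => tT; last by rewrite andbF.
by rewrite same_off_u // eqxx andbF.
Qed.

End OldColorComplete.

Lemma color_complete_introduce (g0 : col) :
  2 <= k -> g0 \in colorings e k W ->
  color_complete (CS_node e (W :\ v) (T :\ v)) (@CS_adj V k) (CS_lab (T :\ v)) (k - 2) ->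
  color_complete (CS_node e W T) (@CS_adj V k) (CS_lab T) (k - 1).
Proof.
move=> k2 g0c /(CS_color_completeE (coloring_delv g0c) clique_setD1) [cTv onto uniq adj].
apply: CS_color_complete => //.
- by rewrite (cardsD1 v T) vT cTv; lia.
- exact: introduce_onto.
- exact: introduce_uniq.
- exact: introduce_adj.
Qed.

Lemma introduce_vertex_cut : is_vertex_cut e W (T :\ v).
Proof.
have [TW_neq _ _] := intro.
have [y yW yT] : exists2 y, y \in W & y \notin T.
  apply/exists_inP; apply: contraR TW_neq; rewrite negb_exists_in => /forall_inP yT.
  by rewrite eqEsubset TW; apply/subsetP => y /yT; rewrite negbK.
split; first exact: subset_trans (subsetDl _ _) TW.
exists v, y; split; rewrite ?inE ?eqxx ?vW ?yW ?(negbTE yT) ?andbF //.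
apply/negP => /connectP [[|z p] /= pth yv]; first by rewrite yv vT in yT.
case/andP: pth => /and3P [_ /setDP [zW zTv] evz] _.
by move: zTv; rewrite !inE Nv // andbT negbK => /eqP zv; rewrite zv e_irr in evz.
Qed.

Lemma CS_node_restrict (x : {set col}) :
  CS_node e W T x -> CS_node e (W :\ v) (T :\ v) (restrict_node x).
Proof.
by case/CS_nodeP => g gc ->; rewrite restrict_node_lcomp //; apply/lcomp_node/coloring_delv.
Qed.

Lemma restrict_node_inj (x y : {set col}) :
  CS_node e W T x -> CS_node e W T y ->
  restrict_node x = restrict_node y -> CS_lab T x v = CS_lab T y v -> x = y.
Proof.
move=> /CS_nodeP [g gc ->] /CS_nodeP [h hc ->].
rewrite !restrict_node_lcomp // !CS_lab_lcomp // !label_in //.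
exact: lcomp_eq_delv.
Qed.

Lemma restrict_node_label (x y : {set col}) :
  CS_node e W T x -> CS_node e W T y -> CS_lab T x = CS_lab T y ->
  CS_lab T x v = CS_lab T y v /\
  CS_lab (T :\ v) (restrict_node x) = CS_lab (T :\ v) (restrict_node y).
Proof.
move=> /CS_nodeP [g gc ->] /CS_nodeP [h hc ->] lgh; split; first by rewrite lgh.
move: lgh; rewrite !restrict_node_lcomp // !CS_lab_lcomp ?coloring_delv //.
by rewrite !label_setD1 => ->.
Qed.

Lemma restrict_agree (g h : col) :
  g \in colorings e k W -> h \in colorings e k W ->
  lcompGv (setv v g None) = lcompGv (setv v h None) -> {in T :\ v, g =1 h}.
Proof.
move=> gc hc /(congr1 (CS_lab (T :\ v))); rewrite !CS_lab_lcomp ?coloring_delv //.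
move=> /ffunP lgh t tTv; have := lgh t; rewrite !label_in // !ffunE.
by rewrite (negbTE (setD1P tTv).1).
Qed.

Lemma restrict_node_adj_cross (x y : {set col}) :
  CS_node e W T x -> CS_node e W T y -> CS_adj x y ->
  restrict_node x != restrict_node y ->
  exists g h u, [/\ g \in colorings e k W, h \in colorings e k W,
     x = lcompG g, y = lcompG h &
     [/\ u \in T :\ v, g u != h u & forall z, z != u -> g z = h z]].
Proof.
move=> /CS_nodeP [g0 g0c ->] /CS_nodeP [h0 h0c ->] /(CS_adj_lcomp g0c h0c).
case=> g [h [u [gg0 hh0 ghu gh Du]]].
have [gc _] := lcomp_inv g0c gg0; have [hc _] := lcomp_inv h0c hh0.
rewrite (lcomp_eq_mem gg0) (lcomp_eq_mem hh0) !restrict_node_lcomp // => neq.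
exists g, h, u; split => //; split => //; rewrite !inE.
have -> : u \in T by have := set11 u; rewrite -Du inE => /andP [].
rewrite andbT; apply: contraNneq neq => uv; apply/eqP; congr (lcomp _ _ _).
by apply/ffunP => z; rewrite !ffunE; case: (eqVneq z v) => // zv; rewrite gh // uv.
Qed.

Lemma restrict_node_adj (x y : {set col}) :
  CS_node e W T x -> CS_node e W T y -> CS_adj x y ->
  restrict_node x != restrict_node y ->
  CS_adj (restrict_node x) (restrict_node y) /\ CS_lab T x v = CS_lab T y v.
Proof.
move=> xn yn xy neq.
have [g [h [u [gc hc xE yE [uTv ghu gh]]]]] := restrict_node_adj_cross xn yn xy neq.
subst x y.
have uv : u != v by case/setD1P: uTv.
have gvh : g v = h v by rewrite gh // eq_sym.
split; last by rewrite !CS_lab_lcomp // !label_in.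
move: neq; rewrite !restrict_node_lcomp // => neq; rewrite /CS_adj neq /=.
apply/existsP; exists (setv v g None); rewrite lcomp_refl /=.
apply/existsP; exists (setv v h None); rewrite lcomp_refl /=.
by apply: col_adj_setv => //; apply/col_adjP; exists u.
Qed.

Section FreeColors.
Hypotheses (k_ge2 : 2 <= k) (card_Tv : #|T :\ v| = k - 2).

Definition free_colors (g : col) : {set option 'I_k} := ~: (None |: g @: (T :\ v)).

Lemma free_colors_v (g : col) : g \in colorings e k W -> g v \in free_colors g.
Proof.
move=> gc; rewrite !inE negb_or (coloring_dom _ gc) vW /=.
by apply/imsetP => -[t tTv /eqP]; rewrite eq_sym (negbTE (coloring_clique_v gc tTv)).
Qed.

Lemma card_free_colors (g : col) : g \in colorings e k W -> #|free_colors g| = 2.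
Proof.
move=> gc; rewrite cardsCs setCK card_option card_ord cardsU1.
rewrite (None_notin_colors gc (subset_trans (subsetDl _ _) TW)).
by rewrite (card_colors_clique gc T_clique (subsetDl _ _)) card_Tv /=; lia.
Qed.

Lemma free_colors_restrict (g h : col) :
  g \in colorings e k W -> h \in colorings e k W ->
  lcompGv (setv v g None) = lcompGv (setv v h None) -> free_colors g = free_colors h.
Proof. by move=> gc hc /(restrict_agree gc hc) gh; rewrite /free_colors (eq_in_imset gh). Qed.

Lemma card_free_colors_adj (g h : col) u :
  g \in colorings e k W -> h \in colorings e k W ->
  u \in T :\ v -> g u != h u -> (forall z, z != u -> g z = h z) ->
  #|free_colors g :&: free_colors h| <= 1.
Proof.
move=> gc hc uTv ghu gh; have [uv uT] := setD1P uTv.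
have TvW : T :\ v \subset W := subset_trans (subsetDl _ _) TW.
have fresh : h u \notin None |: g @: (T :\ v).
  rewrite !inE negb_or (coloring_dom _ hc) (subsetP TW) //=.
  apply/imsetP => -[t /setD1P [_ tT]]; case: (eqVneq t u) => [->|tu].
    by move=> E; rewrite E eqxx in ghu.
  by rewrite gh // => /(coloring_inj hc T_clique uT tT) ut; rewrite ut eqxx in tu.
have sub : h u |: (None |: g @: (T :\ v)) \subset
           (None |: g @: (T :\ v)) :|: (None |: h @: (T :\ v)).
  by rewrite subUset subsetUl sub1set !inE (imset_f h uTv) !orbT.
rewrite /free_colors -setCU cardsCs setCK card_option card_ord.
move: (subset_leq_card sub); rewrite cardsU1 fresh cardsU1 (None_notin_colors gc TvW).
rewrite (card_colors_clique gc T_clique (subsetDl _ _)) card_Tv /=.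
by move: #|_ :|: _| => n; lia.
Qed.

Lemma restrict_node_fiber (x1 x2 x3 : {set col}) :
  CS_node e W T x1 -> CS_node e W T x2 -> CS_node e W T x3 ->
  restrict_node x1 = restrict_node x2 -> restrict_node x1 = restrict_node x3 ->
  [|| x1 == x2, x1 == x3 | x2 == x3].
Proof.
move=> /CS_nodeP [g1 g1c ->] /CS_nodeP [g2 g2c ->] /CS_nodeP [g3 g3c ->].
rewrite !restrict_node_lcomp // => E12 E13.
have v_neq g h : g \in colorings e k W -> h \in colorings e k W ->
    lcompGv (setv v g None) = lcompGv (setv v h None) -> lcompG g != lcompG h -> g v != h v.
  by move=> gc hc E; apply: contraNneq => /(lcomp_eq_delv gc hc E) ->.
apply/negPn/negP; rewrite !negb_or => /and3P [n12 n13 n23].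
have : g1 v |: [set g2 v; g3 v] \subset free_colors g1.
  apply/subsetP => c /setU1P [->|/set2P [] ->]; first exact: free_colors_v.
    by rewrite (free_colors_restrict g1c g2c E12) free_colors_v.
  by rewrite (free_colors_restrict g1c g3c E13) free_colors_v.
move/subset_leq_card; rewrite card_free_colors // cardsU1 cards2 in_set2 negb_or.
by rewrite !v_neq // (etrans (esym E12) E13).
Qed.

Lemma restrict_node_cross (x y x' y' : {set col}) :
  CS_node e W T x -> CS_node e W T y -> CS_node e W T x' -> CS_node e W T y' ->
  CS_adj x y -> CS_adj x' y' -> restrict_node x != restrict_node y ->
  restrict_node x' = restrict_node x -> restrict_node y' = restrict_node y ->
  CS_lab T x v = CS_lab T x' v.
Proof.
move=> xn yn x'n y'n xy x'y' neq E1 E2.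
have [g [h [u [gc hc xE yE [uTv ghu gh]]]]] := restrict_node_adj_cross xn yn xy neq.
have neq' : restrict_node x' != restrict_node y' by rewrite E1 E2.
have [g' [h' [u' [g'c h'c x'E y'E [u'Tv gh'u gh']]]]] :=
  restrict_node_adj_cross x'n y'n x'y' neq'.
subst x y x' y'.
rewrite !restrict_node_lcomp // in E1 E2.
rewrite !CS_lab_lcomp // !label_in //.
have common g0 h0 : g0 \in colorings e k W -> h0 \in colorings e k W ->
    lcompGv (setv v g0 None) = lcompGv (setv v g None) ->
    lcompGv (setv v h0 None) = lcompGv (setv v h None) ->
    g0 v = h0 v -> g0 v \in free_colors g :&: free_colors h.
  move=> g0c h0c Eg Eh gh0; rewrite inE -(free_colors_restrict g0c gc Eg).
  by rewrite -(free_colors_restrict h0c hc Eh) free_colors_v // gh0 free_colors_v.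
have v_agree g0 h0 w : w \in T :\ v -> (forall z, z != w -> g0 z = h0 z) -> g0 v = h0 v.
  by move=> /setD1P [wv _]; apply; rewrite eq_sym.
apply: (card_le1_eqP (card_free_colors_adj gc hc uTv ghu gh)).
- by apply: (common g' h') => //; apply: v_agree u'Tv gh'.
- by apply: (common g h) => //; apply: v_agree uTv gh.
Qed.

End FreeColors.

End Introduce.
End Colorings.

Section ForestLeaf.
Variables (N : finType) (nodes : N -> Prop) (adj : rel N).
Hypotheses (adj_sym : symmetric adj) (adj_irr : irreflexive adj).
Hypothesis adj_forest : forest nodes adj.
Variable S : {set N}.
Hypothesis S_nodes : forall x, x \in S -> nodes x.

Lemma forest_path_extend x q :
  uniq (x :: q) -> {subset x :: q <= S} -> path adj x q ->
  (exists y1 y2, [/\ y1 \in S, y2 \in S, adj x y1, adj x y2 & y1 != y2]) ->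
  exists2 y, y \in S & y \notin x :: q /\ adj x y.
Proof.
move=> xq_uniq xqS xq_path [y1 [y2 [y1S y2S xy1 xy2 y12]]].
have [y [yS xy yh]] : exists y, [/\ y \in S, adj x y & y != head x q].
  case: (eqVneq y1 (head x q)) => [E|]; last by exists y1.
  by exists y2; split; rewrite // -E eq_sym.
exists y => //; split => //; apply/negP => yxq.
have yx : y != x by apply: contraTneq xy => ->; rewrite adj_irr.
case: q xq_uniq xqS xq_path yh yxq => [|z q] xq_uniq xqS xq_path yh yxq.
  by rewrite inE (negbTE yx) in yxq.
move: xq_uniq xqS xq_path; move: yxq; rewrite !inE (negbTE yx) (negbTE yh) /=.
move=> /splitPr [q1 q2] xq_uniq xqS xq_path.
case: adj_forest; exists (x :: z :: rcons q1 y); split.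
- have : uniq ((x :: z :: rcons q1 y) ++ q2) by rewrite /= cat_rcons.
  by rewrite cat_uniq => /andP [].
- by rewrite /= size_rcons.
- move=> w wxzq; apply/S_nodes/xqS; move: wxzq.
  by rewrite !inE mem_rcons inE mem_cat inE; case/or3P => [->|->|/orP [->|->]]; rewrite ?orbT.
- rewrite /cycle rcons_path /= last_rcons (adj_sym y x) xy andbT.
  have : path adj x ((z :: rcons q1 y) ++ q2) by rewrite cat_cons cat_rcons.
  by rewrite cat_path => /andP [].
Qed.

Lemma forest_leaf :
  S != set0 ->
  exists2 x, x \in S & {in S &, forall y y', adj x y -> adj x y' -> y = y'}.
Proof.
move=> S0; case: (boolP [exists x in S, [forall y in S, forall y' in S,
                           adj x y ==> adj x y' ==> (y == y')]]).
  case/exists_inP => x xS /forall_inP leaf; exists x => // y y' yS y'S xy xy'.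
  by have /forall_inP/(_ y' y'S) := leaf y yS; rewrite xy xy' => /eqP.
rewrite negb_exists_in => /forall_inP no_leaf.
have two_nbrs x : x \in S ->
    exists y1 y2, [/\ y1 \in S, y2 \in S, adj x y1, adj x y2 & y1 != y2].
  move/no_leaf; rewrite negb_forall_in => /exists_inP [y1 y1S].
  rewrite negb_forall_in => /exists_inP [y2 y2S].
  by rewrite !negb_imply => /and3P [xy1 xy2 y12]; exists y1, y2.
have long n : exists x q, [/\ uniq (x :: q), {subset x :: q <= S},
                              path adj x q & n <= size q].
  elim: n => [|n [x [q [xq_uniq xqS xq_path qn]]]].
    have /set0Pn [x xS] := S0; exists x, [::]; split => // y.
    by rewrite inE => /eqP ->.
  have [y yS [yxq xy]] :=
    forest_path_extend xq_uniq xqS xq_path (two_nbrs _ (xqS _ (mem_head _ _))).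
  exists y, (x :: q); split; rewrite /= ?yxq ?(adj_sym y x) ?xy //.
  by move=> w; rewrite inE => /orP [/eqP ->|/xqS].
have [x [q [xq_uniq xqS _ Sq]]] := long #|S|.
have : size (x :: q) <= #|S|.
  by rewrite cardE; apply: uniq_leq_size => // y /xqS; rewrite mem_enum.
by rewrite /= ltnNge Sq.
Qed.

End ForestLeaf.

Lemma cycle_nbrs (N : eqType) (r : rel N) (s : seq N) x :
  uniq s -> 3 <= size s -> cycle r s -> x \in s ->
  exists a b, [/\ a \in s, b \in s, a != b, a != x & b != x] /\ r x a /\ r b x.
Proof.
move=> s_uniq s_size s_cycle /rot_to [i s' s_rot].
have xs'_uniq : uniq (x :: s') by rewrite -s_rot rot_uniq.
have xs'_cycle : cycle r (x :: s') by rewrite -s_rot rot_cycle.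
have xs'_size : size (x :: s') = size s by rewrite -s_rot size_rot.
have xs'_sub w : w \in x :: s' -> w \in s by rewrite -s_rot mem_rot.
case: s' s_rot xs'_uniq xs'_cycle xs'_size xs'_sub => [|a [|c t]] s_rot xs'_uniq
  xs'_cycle xs'_size xs'_sub; rewrite -?xs'_size // in s_size.
exists a, (last c t); split; last first.
  by move: xs'_cycle; rewrite /cycle rcons_path /= => /andP [/andP [-> _] ->].
move: xs'_uniq => /andP [xn /andP [an _]].
have lt : last c t \in c :: t by apply: mem_last.
split.
- by apply: xs'_sub; rewrite !inE eqxx orbT.
- by apply: xs'_sub; rewrite inE; apply/orP; right; rewrite inE lt orbT.
- by apply: contraNneq an => ->.
- by apply: contraNneq xn => ->; rewrite mem_head.
- by apply: contraNneq xn => <-; rewrite inE lt orbT.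
Qed.

Section FiberForest.
Variables (N : finType) (nodesG nodesH : N -> Prop) (adjG adjH : rel N).
Variables (p : N -> N) (C : eqType) (c : N -> C).
Hypotheses (adjG_sym : symmetric adjG) (adjG_irr : irreflexive adjG).
Hypotheses (adjH_sym : symmetric adjH) (adjH_irr : irreflexive adjH).
Hypothesis p_nodes : forall x, nodesG x -> nodesH (p x).
Hypothesis p_adj : forall x y, nodesG x -> nodesG y -> adjG x y -> p x != p y ->
  adjH (p x) (p y) /\ c x = c y.
Hypothesis p_c_inj : forall x y, nodesG x -> nodesG y -> p x = p y -> c x = c y -> x = y.

Lemma inj_nbhd_fiber (L L' : Type) (labG : N -> L) (labH : N -> L') :
  (forall x y, nodesG x -> nodesG y -> labG x = labG y -> c x = c y /\ labH (p x) = labH (p y)) ->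
  inj_nbhd nodesH adjH labH -> inj_nbhd nodesG adjG labG.
Proof.
move=> p_lab injH x y z xn yn zn xy xz yz lyz.
have [cyz lHyz] := p_lab _ _ yn zn lyz.
have pyz : p y != p z by apply/eqP => E; exact: yz (p_c_inj yn zn E cyz).
have in_fiber w : nodesG w -> adjG x w -> p x = p w -> c x = c w -> False.
  move=> wn xw pw cw; have xw_eq := p_c_inj xn wn pw cw.
  by rewrite xw_eq adjG_irr in xw.
case: (eqVneq (p x) (p y)) => [pxy|pxy].
  have pxz : p x != p z by rewrite pxy.
  have [_ cxz] := p_adj xn zn xz pxz.
  by apply: (in_fiber y) => //; rewrite cyz.
case: (eqVneq (p x) (p z)) => [pxz|pxz].
  have [_ cxy] := p_adj xn yn xy pxy.
  by apply: (in_fiber z) => //; rewrite -cyz.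
have [Hxy _] := p_adj xn yn xy pxy; have [Hxz _] := p_adj xn zn xz pxz.
exact: injH _ _ _ (p_nodes xn) (p_nodes yn) (p_nodes zn) Hxy Hxz (elimN eqP pyz) lHyz.
Qed.

Hypothesis p_fiber : forall x1 x2 x3, nodesG x1 -> nodesG x2 -> nodesG x3 ->
  p x1 = p x2 -> p x1 = p x3 -> [|| x1 == x2, x1 == x3 | x2 == x3].
Hypothesis p_cross : forall x y x' y',
  nodesG x -> nodesG y -> nodesG x' -> nodesG y' -> adjG x y -> adjG x' y' ->
  p x != p y -> p x' = p x -> p y' = p y -> c x = c x'.

Section LeafOfCycle.
Variable s : seq N.
Hypotheses (s_uniq : uniq s) (s_size : 3 <= size s) (s_cycle : cycle adjG s).
Hypothesis s_nodes : forall x, x \in s -> nodesG x.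
Variable x0 : N.
Hypothesis x0s : x0 \in s.
Hypothesis leaf : {in p @: s &, forall y y', adjH (p x0) y -> adjH (p x0) y' -> y = y'}.

Lemma cycle_nbrs_sym x : x \in s ->
  exists a b, [/\ a \in s, b \in s, a != b, a != x & b != x] /\ adjG x a /\ adjG x b.
Proof.
move=> xs; have [a [b [abs [xa bx]]]] := cycle_nbrs s_uniq s_size s_cycle xs.
by exists a, b; rewrite (adjG_sym x b).
Qed.

Lemma fiber_third a b : a \in s -> b \in s ->
  a != x0 -> b != x0 -> b != a -> p x0 = p a -> p x0 != p b.
Proof.
move=> a_s bs ax0 bx0 ba pa; apply/eqP => pb.
have := p_fiber (s_nodes x0s) (s_nodes a_s) (s_nodes bs) pa pb.
by rewrite ![x0 == _]eq_sym [a == b]eq_sym (negbTE ax0) (negbTE bx0) (negbTE ba).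
Qed.

Lemma leaf_nbr_in_fiber a : a \in s -> a != x0 -> adjG x0 a -> p x0 != p a.
Proof.
move=> a_s ax0 x0a; apply/negP => /eqP pa.
have [b1 [b2 [[b1s b2s b12 b1x0 b2x0] [x0b1 x0b2]]]] := cycle_nbrs_sym x0s.
have [b [bs bx0 ba x0b]] : exists b, [/\ b \in s, b != x0, b != a & adjG x0 b].
  case: (eqVneq b1 a) => [E|]; last by exists b1.
  by exists b2; split => //; rewrite -E eq_sym.
have [d1 [d2 [[d1s d2s d12 d1a d2a] [ad1 ad2]]]] := cycle_nbrs_sym a_s.
have [d [ds da dx0 ad]] : exists d, [/\ d \in s, d != a, d != x0 & adjG a d].
  case: (eqVneq d1 x0) => [E|]; last by exists d1.
  by exists d2; split => //; rewrite -E eq_sym.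
have pb := fiber_third a_s bs ax0 bx0 ba pa.
have pd := fiber_third a_s ds ax0 dx0 da pa; rewrite pa in pd.
have [Hb _] := p_adj (s_nodes x0s) (s_nodes bs) x0b pb.
have [Hd _] := p_adj (s_nodes a_s) (s_nodes ds) ad pd; rewrite -pa in Hd.
have pbd := leaf (imset_f p bs) (imset_f p ds) Hb Hd.
have := p_cross (s_nodes x0s) (s_nodes bs) (s_nodes a_s) (s_nodes ds) x0b ad pb.
move=> /(_ (esym pa) (esym pbd)) /(p_c_inj (s_nodes x0s) (s_nodes a_s) pa) x0a_eq.
by rewrite x0a_eq eqxx in ax0.
Qed.

Lemma cycle_leaf_contra : False.
Proof.
have [a [b [[a_s bs ab ax0 bx0] [x0a x0b]]]] := cycle_nbrs_sym x0s.
have pa := leaf_nbr_in_fiber a_s ax0 x0a; have pb := leaf_nbr_in_fiber bs bx0 x0b.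
have [Ha ca] := p_adj (s_nodes x0s) (s_nodes a_s) x0a pa.
have [Hb cb] := p_adj (s_nodes x0s) (s_nodes bs) x0b pb.
have pab := leaf (imset_f p a_s) (imset_f p bs) Ha Hb.
have := p_c_inj (s_nodes a_s) (s_nodes bs) pab (etrans (esym ca) cb).
by move=> E; rewrite E eqxx in ab.
Qed.

End LeafOfCycle.

Lemma forest_fiber : forest nodesH adjH -> forest nodesG adjG.
Proof.
move=> forestH [s [s_uniq s_size s_nodes s_cycle]].
have S_nodes y : y \in p @: s -> nodesH y by case/imsetP => x xs ->; apply/p_nodes/s_nodes.
have S0 : p @: s != set0.
  case: s s_size {s_uniq s_nodes s_cycle S_nodes} => // x s' _.
  by apply/set0Pn; exists (p x); rewrite imset_f ?mem_head.
have [y /imsetP [x0 x0s ->] leaf] := forest_leaf adjH_sym adjH_irr forestH S_nodes S0.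
apply: (cycle_leaf_contra s_uniq s_size s_cycle s_nodes x0s); exact: leaf.
Qed.

End FiberForest.

Section Edgeless.
Variables (N : eqType) (nodes : N -> Prop) (adj : rel N).
Hypothesis no_adj : forall x y, nodes x -> nodes y -> ~~ adj x y.

Lemma forest_edgeless : forest nodes adj.
Proof.
case=> -[|x [|y s]] [//= _ _ s_nodes /andP [xy _]].
by move: xy; rewrite (negbTE (no_adj (s_nodes _ (mem_head _ _)) (s_nodes y _))) // !inE eqxx orbT.
Qed.

Lemma inj_nbhd_edgeless (L : Type) (lab : N -> L) : inj_nbhd nodes adj lab.
Proof. by move=> x y z xn yn _ xy; move: xy; rewrite (negbTE (no_adj xn yn)). Qed.

End Edgeless.

Lemma CS_adj_sym (V : finType) k : symmetric (@CS_adj V k).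
Proof.
move=> x y; rewrite /CS_adj eq_sym; congr (_ && _).
by apply/existsP/existsP => -[g /andP [gx /existsP [h /andP [hy gh]]]];
  exists h; rewrite hy /=; apply/existsP; exists g; rewrite gx col_adjC.
Qed.

Lemma CS_adj_irr (V : finType) k : irreflexive (@CS_adj V k).
Proof. by move=> x; rewrite /CS_adj eqxx. Qed.

Theorem lemma8 (V : finType) (e : rel V) (k : nat) (W T : {set V}) (v : V) :
  3 <= k ->
  symmetric e -> irreflexive e ->
  l_connected e (k - 2) W ->
  (exists g : pcol V k, g \in colorings e k W) ->
  chordal e W ->
  is_clique e W T ->
  introduce e W T v ->
  (color_complete (CS_node e (W :\ v) (T :\ v)) (@CS_adj V k)
       (CS_lab (T :\ v)) (k - 2) ->
   color_complete (CS_node e W T) (@CS_adj V k) (CS_lab T) (k - 1)) /\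
  (#|T| = k \/
   (forest (CS_node e (W :\ v) (T :\ v)) (@CS_adj V k) /\
    inj_nbhd (CS_node e (W :\ v) (T :\ v)) (@CS_adj V k) (CS_lab (T :\ v))) ->
   forest (CS_node e W T) (@CS_adj V k) /\
   inj_nbhd (CS_node e W T) (@CS_adj V k) (CS_lab T)).
Proof.
move=> k_ge3 e_sym e_irr [_ cut_ge] [g0 g0c] _ T_clique intro.
have k_ge2 : 2 <= k by apply: ltnW.
split; first by move=> /(color_complete_introduce e_sym e_irr T_clique intro k_ge2 g0c).
case: (eqVneq #|T| k) => [cT _|cTk].
  have no_adj x y := @no_CS_adj_full V e k W T x y T_clique cT.
  by split; [apply: forest_edgeless | apply: inj_nbhd_edgeless].
case=> [/eqP|[forestGv injGv]]; first by rewrite (negbTE cTk).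
have cTv : #|T :\ v| = k - 2.
  have := cut_ge _ (introduce_vertex_cut e_irr T_clique intro).
  have := card_clique_le g0c T_clique; have [_ vT _] := intro.
  by move: (cardsD1 v T) cTk; rewrite vT => ? /eqP ? ? ?; lia.
pose c (x : {set pcol V k}) := CS_lab T x v.
have p_nodes := CS_node_restrict (k := k) intro.
have p_adj := restrict_node_adj (k := k) intro.
have p_inj := restrict_node_inj (k := k) e_sym e_irr T_clique intro.
split.
  exact (forest_fiber (c := c) (@CS_adj_sym V k) (@CS_adj_sym V k) (@CS_adj_irr V k)
    p_nodes p_adj p_inj
    (restrict_node_fiber e_sym e_irr T_clique intro k_ge2 cTv)
    (restrict_node_cross T_clique intro k_ge2 cTv) forestGv).
exact (inj_nbhd_fiber (c := c) (@CS_adj_irr V k) p_nodes p_adj p_inj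
  (restrict_node_label intro) injGv).
Qed.
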